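(* The functor $\mathrm{Skew}$ from curved associative algebras to curved Lie algebras, sending $(A,\mu_A,d_A,\vartheta)$ to $(A,[x,y]=\mu_A(x,y)-(-1)^{|x||y|}\mu_A(y,x),d_A,\vartheta)$, has a left adjoint $\mathfrak{U}$ (the curved universal enveloping algebra).
   Context: Ground field $\mathbb{K}$ of characteristic $0$, graded modules with Koszul signs, homological grading. A curved Lie algebra $(\mathfrak{g},[-,-],d_\mathfrak{g},\vartheta)$ is a graded Lie algebra with a degree $-1$ derivation $d_\mathfrak{g}$ of the bracket and an element $\vartheta\in\mathfrak{g}_{-2}$ with $d_\mathfrak{g}^2=[\vartheta,-]$ and $d_\mathfrak{g}(\vartheta)=0$; morphisms are graded Lie algebra maps commuting with pre-differentials and preserving curvatures. A curved associative algebra $(A,\mu_A,d_A,\vartheta)$ is a non-unital graded associative algebra with a degree $-1$ derivation $d_A$ and $\vartheta\in A_{-2}$ with $d_A^2=\mu_A(\vartheta,-)-\mu_A(-,\vartheta)$ and $d_A(\vartheta)=0$; morphisms are algebra maps commuting with pre-differentials and preserving curvatures. *)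

From HB Require Import structures.
From mathcomp Require Import all_boot all_order all_algebra.
From Stdlib Require Import ClassicalEpsilon.
Set Implicit Arguments. Unset Strict Implicit. Unset Printing Implicit Defensive.
Import Order.TTheory GRing.Theory Num.Theory.
Local Open Scope ring_scope.

(* A Z-graded K-module is represented by its total space V together with the
   family of projections pi n onto the homogeneous components V_n, such that
   V = (+)_n V_n (orthogonal idempotent linear projections, every vector being
   the finite sum of its components). *)
Record is_grading (K : fieldType) (V : lmodType K) (pi : int -> V -> V) : Prop :=
  IsGrading {
    gr_lin : forall n (a : K) (x y : V), pi n (a *: x + y) = a *: pi n x + pi n y;
    gr_orth : forall n m (x : V), pi n (pi m x) = if n == m then pi m x else 0;
    gr_dec : forall x : V, exists s : seq int,
        [/\ uniq s, (forall n, n \notin s -> pi n x = 0) & x = \sum_(n <- s) pi n x]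
  }.

Definition homog (K : fieldType) (V : lmodType K) (pi : int -> V -> V) (n : int) (x : V) :=
  pi n x = x.

Definition ksgn (K : fieldType) (p q : int) : K := (-1) ^+ (absz (p * q)).
Definition ksgn1 (K : fieldType) (p : int) : K := (-1) ^+ (absz p).

Definition bilinear_op (K : fieldType) (V : lmodType K) (m : V -> V -> V) :=
  (forall (a : K) x y z, m (a *: x + y) z = a *: m x z + m y z) /\
  (forall (a : K) x y z, m z (a *: x + y) = a *: m z x + m z y).

Definition linear_op (K : fieldType) (V W : lmodType K) (f : V -> W) :=
  forall (a : K) x y, f (a *: x + y) = a *: f x + f y.

Record curved_lie_axioms (K : fieldType) (V : lmodType K) (pi : int -> V -> V)
    (br : V -> V -> V) (d : V -> V) (th : V) : Prop := CurvedLieAxioms {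
  cla_bil : bilinear_op br;
  cla_deg : forall p q x y, homog pi p x -> homog pi q y -> homog pi (p + q) (br x y);
  cla_antisym : forall p q x y, homog pi p x -> homog pi q y ->
      br x y = - (ksgn K p q *: br y x);
  cla_jacobi : forall p q r x y z, homog pi p x -> homog pi q y -> homog pi r z ->
      ksgn K p r *: br x (br y z) + ksgn K q p *: br y (br z x)
        + ksgn K r q *: br z (br x y) = 0;
  cla_dlin : linear_op d;
  cla_ddeg : forall p x, homog pi p x -> homog pi (p - 1) (d x);
  cla_dder : forall p x y, homog pi p x ->
      d (br x y) = br (d x) y + ksgn1 K p *: br x (d y);
  cla_thdeg : homog pi (-2) th;
  cla_dd : forall x, d (d x) = br th x;
  cla_dth : d th = 0
}.

Record curved_ass_axioms (K : fieldType) (V : lmodType K) (pi : int -> V -> V)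
    (mu : V -> V -> V) (d : V -> V) (th : V) : Prop := CurvedAssAxioms {
  caa_bil : bilinear_op mu;
  caa_deg : forall p q x y, homog pi p x -> homog pi q y -> homog pi (p + q) (mu x y);
  caa_assoc : forall x y z, mu (mu x y) z = mu x (mu y z);
  caa_dlin : linear_op d;
  caa_ddeg : forall p x, homog pi p x -> homog pi (p - 1) (d x);
  caa_dder : forall p x y, homog pi p x ->
      d (mu x y) = mu (d x) y + ksgn1 K p *: mu x (d y);
  caa_thdeg : homog pi (-2) th;
  caa_dd : forall x, d (d x) = mu th x - mu x th;
  caa_dth : d th = 0
}.

Record curvedLie (K : fieldType) := CurvedLie {
  cl_car :> lmodType K;
  cl_pi : int -> cl_car -> cl_car;
  cl_br : cl_car -> cl_car -> cl_car;
  cl_d : cl_car -> cl_car;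
  cl_th : cl_car;
  cl_grading : is_grading cl_pi;
  cl_ax : curved_lie_axioms cl_pi cl_br cl_d cl_th
}.

Record curvedAss (K : fieldType) := CurvedAss {
  ca_car :> lmodType K;
  ca_pi : int -> ca_car -> ca_car;
  ca_mu : ca_car -> ca_car -> ca_car;
  ca_d : ca_car -> ca_car;
  ca_th : ca_car;
  ca_grading : is_grading ca_pi;
  ca_ax : curved_ass_axioms ca_pi ca_mu ca_d ca_th
}.

Arguments cl_pi {K} c.
Arguments cl_br {K} c.
Arguments cl_d {K} c.
Arguments cl_th {K} c.
Arguments cl_grading {K} c.
Arguments cl_ax {K} c.
Arguments ca_pi {K} c.
Arguments ca_mu {K} c.
Arguments ca_d {K} c.
Arguments ca_th {K} c.
Arguments ca_grading {K} c.
Arguments ca_ax {K} c.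

Definition curved_mor (K : fieldType) (V W : lmodType K)
    (pi1 : int -> V -> V) (m1 : V -> V -> V) (d1 : V -> V) (th1 : V)
    (pi2 : int -> W -> W) (m2 : W -> W -> W) (d2 : W -> W) (th2 : W) (f : V -> W) :=
  [/\ linear_op f,
      forall n x, f (pi1 n x) = pi2 n (f x),
      forall x y, f (m1 x y) = m2 (f x) (f y),
      forall x, f (d1 x) = d2 (f x) &
      f th1 = th2].

Definition ass_mor (K : fieldType) (A B : curvedAss K) (f : A -> B) :=
  curved_mor (ca_pi A) (ca_mu A) (ca_d A) (ca_th A)
             (ca_pi B) (ca_mu B) (ca_d B) (ca_th B) f.

Definition ca_supp (K : fieldType) (A : curvedAss K) (x : A) : seq int :=
  proj1_sig (constructive_indefinite_description _ (gr_dec (ca_grading A) x)).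

(* The bracket of Skew(A): bilinear extension of
   [x,y] = mu(x,y) - (-1)^{|x||y|} mu(y,x) on homogeneous elements. *)
Definition skew_br (K : fieldType) (A : curvedAss K) (x y : A) : A :=
  \sum_(p <- ca_supp x) \sum_(q <- ca_supp y)
    (ca_mu A (ca_pi A p x) (ca_pi A q y)
       - ksgn K p q *: ca_mu A (ca_pi A q y) (ca_pi A p x)).

(* f : g -> Skew(A) is a morphism of curved Lie algebras.  Skew(A) has the
   same underlying graded module, pre-differential and curvature as A. *)
Definition lie_mor_to_skew (K : fieldType) (g : curvedLie K) (A : curvedAss K)
    (f : g -> A) :=
  curved_mor (cl_pi g) (cl_br g) (cl_d g) (cl_th g)
             (ca_pi A) (@skew_br K A) (ca_d A) (ca_th A) f.

(* U(g) is a term model: terms are built from the elements of g with the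
   operations of a curved associative algebra (sum, opposite, scaling, product,
   pre-differential, homogeneous projections, curvature), and two terms are
   identified when they take the same value under every curved Lie morphism
   g -> Skew(A), for every curved associative algebra A.  Every axiom except the
   existence of homogeneous decompositions is an identity, so it holds in U(g)
   because it holds in each A; decompositions exist because every term is a
   finite sum of homogeneous ones.  Evaluating terms gives the extension of a Lie
   morphism, and it is unique because algebra morphisms commute with evaluation. *)

From HB Require Import structures.
From mathcomp Require Import all_boot all_order all_algebra.
From mathcomp Require Import boolp.
Set Implicit Arguments. Unset Strict Implicit. Unset Printing Implicit Defensive.
Import GRing.Theory.
Local Open Scope ring_scope.
Local Open Scope quotient_scope.

Section LinearOp.
Variables (K : fieldType) (V W : lmodType K) (h : V -> W).
Hypothesis h_lin : linear_op h.

Lemma linear_op0 : h 0 = 0.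
Proof.
have := h_lin 1 0 0; rewrite scaler0 addr0 scale1r => h0.
by apply: (addrI (h 0)); rewrite addr0 -h0.
Qed.

Lemma linear_opD x y : h (x + y) = h x + h y.
Proof. by rewrite -{1}(scale1r x) h_lin scale1r. Qed.

Lemma linear_opZ a x : h (a *: x) = a *: h x.
Proof. by rewrite -(addr0 (a *: x)) h_lin linear_op0 addr0. Qed.

Lemma linear_opN x : h (- x) = - h x.
Proof. by rewrite -scaleN1r linear_opZ scaleN1r. Qed.

Lemma linear_opB x y : h (x - y) = h x - h y.
Proof. by rewrite linear_opD linear_opN. Qed.

Lemma linear_op_sum (I : Type) (r : seq I) (F : I -> V) :
  h (\sum_(i <- r) F i) = \sum_(i <- r) h (F i).
Proof. exact: (big_morph h linear_opD linear_op0). Qed.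

End LinearOp.

Section BilinearOp.
Variables (K : fieldType) (V : lmodType K) (m : V -> V -> V).
Hypothesis m_bil : bilinear_op m.

Lemma bilinear_opl z : linear_op (m ^~ z). Proof. by move=> a x y; apply: m_bil.1. Qed.
Lemma bilinear_opr z : linear_op (m z). Proof. by move=> a x y; apply: m_bil.2. Qed.
Lemma bilinear_op0l z : m 0 z = 0. Proof. exact: linear_op0 (bilinear_opl z). Qed.
Lemma bilinear_op0r z : m z 0 = 0. Proof. exact: linear_op0 (bilinear_opr z). Qed.

End BilinearOp.

Section HomogeneousSums.
Variables (K : fieldType) (V : lmodType K) (pi : int -> V -> V).

Definition homog_sum (x : V) :=
  exists2 l : seq (int * V), {in l, forall p, homog pi p.1 p.2} & x = \sum_(p <- l) p.2.

Lemma homog_sum_homog n x : homog pi n x -> homog_sum x.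
Proof.
by move=> xn; exists [:: (n, x)]; [move=> p; rewrite inE => /eqP -> | rewrite big_seq1].
Qed.

Lemma homog_sum0 : homog_sum 0.
Proof. by exists [::]; rewrite ?big_nil. Qed.

Lemma homog_sumD x y : homog_sum x -> homog_sum y -> homog_sum (x + y).
Proof.
move=> [lx lx_homog ->] [ly ly_homog ->]; exists (lx ++ ly); last by rewrite big_cat.
by move=> p; rewrite mem_cat => /orP[/lx_homog | /ly_homog].
Qed.

Lemma homog_sum_big (I : eqType) (r : seq I) (F : I -> V) :
  {in r, forall i, homog_sum (F i)} -> homog_sum (\sum_(i <- r) F i).
Proof.
move=> F_homog; rewrite big_seq.
by apply: big_ind => [|x y|i /F_homog]; [exact: homog_sum0 | exact: homog_sumD |].
Qed.

Lemma homog_sum_lin (h : V -> V) (k : int -> int) x : linear_op h ->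
  (forall n y, homog pi n y -> homog pi (k n) (h y)) -> homog_sum x -> homog_sum (h x).
Proof.
move=> h_lin h_homog [l l_homog ->]; rewrite (linear_op_sum h_lin).
by apply: homog_sum_big => p /l_homog /h_homog /homog_sum_homog.
Qed.

Lemma homog_sum_bil (m : V -> V -> V) x y : bilinear_op m ->
  (forall p q x y, homog pi p x -> homog pi q y -> homog pi (p + q) (m x y)) ->
  homog_sum x -> homog_sum y -> homog_sum (m x y).
Proof.
move=> m_bil m_homog [lx lx_homog ->] [ly ly_homog ->].
rewrite (linear_op_sum (bilinear_opl m_bil _)).
apply: homog_sum_big => p /lx_homog px; rewrite (linear_op_sum (bilinear_opr m_bil _)).
by apply: homog_sum_big => q /ly_homog qy; exact: homog_sum_homog (m_homog _ _ _ _ px qy).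
Qed.

Hypothesis pi_lin : forall n, linear_op (pi n).
Hypothesis pi_orth : forall n m x, pi n (pi m x) = if n == m then pi m x else 0.

Lemma homog_component m n y : homog pi m y -> pi n y = if n == m then y else 0.
Proof. by move=> ym; rewrite -ym pi_orth. Qed.

Lemma homog_sum_dec x : homog_sum x -> exists s : seq int,
  [/\ uniq s, forall n, n \notin s -> pi n x = 0 & x = \sum_(n <- s) pi n x].
Proof.
case=> l l_homog ->; set s := undup (unzip1 l).
have pi_sum n : pi n (\sum_(p <- l) p.2) = \sum_(p <- l) (if n == p.1 then p.2 else 0).
  by rewrite (linear_op_sum (pi_lin n)); apply: eq_big_seq => p /l_homog /homog_component.
have in_s p : p \in l -> p.1 \in s by move=> p_l; rewrite mem_undup map_f.
exists s; split; first exact: undup_uniq.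
  move=> n n_s; rewrite pi_sum big1_seq // => p /andP[_ /in_s p_s].
  by rewrite ifN //; apply: contraNneq n_s => ->.
under [RHS]eq_bigr do rewrite pi_sum.
rewrite exchange_big /=; apply: eq_big_seq => p /in_s p_s.
rewrite (bigD1_seq p.1) ?undup_uniq //= eqxx big1 ?addr0 // => n.
by rewrite eq_sym => /negbTE ->.
Qed.

End HomogeneousSums.

Lemma eq_big_support (V : zmodType) (G : int -> V) (s1 s2 : seq int) :
  uniq s1 -> uniq s2 -> (forall n, n \notin s1 -> G n = 0) ->
  (forall n, n \notin s2 -> G n = 0) -> \sum_(n <- s1) G n = \sum_(n <- s2) G n.
Proof.
move=> s1_uniq s2_uniq G_s1 G_s2.
have restrict (r1 r2 : seq int) : (forall n, n \notin r2 -> G n = 0) ->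
    \sum_(n <- r1) G n = \sum_(n <- [seq n <- r1 | n \in r2]) G n.
  move=> G_r2; rewrite big_filter [RHS]big_mkcond; apply: eq_bigr => n _.
  by case: ifPn => // /G_r2.
rewrite (restrict s1 s2) // (restrict s2 s1) //; apply/perm_big/uniq_perm.
- exact: filter_uniq.
- exact: filter_uniq.
- by move=> n; rewrite !mem_filter andbC.
Qed.

Section SkewBracket.
Variables (K : fieldType) (A : curvedAss K).

Lemma ca_suppP (x : A) :
  [/\ uniq (ca_supp x), forall n, n \notin ca_supp x -> ca_pi A n x = 0
    & x = \sum_(n <- ca_supp x) ca_pi A n x].
Proof.
by rewrite /ca_supp; case: (ClassicalEpsilon.constructive_indefinite_description _ _).
Qed.

Lemma skew_brE (x y : A) (s t : seq int) :
  uniq s -> (forall n, n \notin s -> ca_pi A n x = 0) ->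
  uniq t -> (forall n, n \notin t -> ca_pi A n y = 0) ->
  skew_br x y = \sum_(p <- s) \sum_(q <- t)
    (ca_mu A (ca_pi A p x) (ca_pi A q y)
       - ksgn K p q *: ca_mu A (ca_pi A q y) (ca_pi A p x)).
Proof.
move=> s_uniq x_s t_uniq y_t; have [sx_uniq x_sx _] := ca_suppP x.
have [sy_uniq y_sy _] := ca_suppP y; have mu_bil := caa_bil (ca_ax A).
have term0 p q : ca_pi A p x = 0 \/ ca_pi A q y = 0 ->
    ca_mu A (ca_pi A p x) (ca_pi A q y)
      - ksgn K p q *: ca_mu A (ca_pi A q y) (ca_pi A p x) = 0.
  by case=> ->; rewrite (bilinear_op0l mu_bil) (bilinear_op0r mu_bil) scaler0 subr0.
rewrite /skew_br (eq_big_support sx_uniq s_uniq) => [|p /x_sx x0|p /x_s x0].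
- apply: eq_bigr => p _.
  by apply: eq_big_support => // q => [/y_sy|/y_t] y0; apply: term0; right.
- by rewrite big1 // => q _; apply: term0; left.
- by rewrite big1 // => q _; apply: term0; left.
Qed.

End SkewBracket.

Lemma ass_mor_skew_br (K : fieldType) (B A : curvedAss K) (h : B -> A) :
  ass_mor h -> forall u v, h (skew_br u v) = skew_br (h u) (h v).
Proof.
case=> h_lin h_pi h_mu _ _ u v; have [su_uniq u_su _] := ca_suppP u.
have [sv_uniq v_sv _] := ca_suppP v.
have h_supp x n : ca_pi B n x = 0 -> ca_pi A n (h x) = 0.
  by rewrite -h_pi => ->; apply: linear_op0.
rewrite (skew_brE (x := h u) (y := h v) su_uniq _ sv_uniq) //;
  [| by move=> n /u_su /h_supp | by move=> n /v_sv /h_supp].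
rewrite /skew_br (linear_op_sum h_lin); apply: eq_bigr => p _.
rewrite (linear_op_sum h_lin); apply: eq_bigr => q _.
by rewrite (linear_opB h_lin) (linear_opZ h_lin) !h_mu !h_pi.
Qed.

Section Enveloping.
Variables (K : fieldType) (g : curvedLie K).

Inductive term : Type :=
| Tgen of g
| Tzero
| Tadd of term & term
| Topp of term
| Tscale of K & term
| Tmul of term & term
| Td of term
| Tpi of int & term
| Tth.

Fixpoint eval (A : curvedAss K) (f : g -> A) (t : term) : A :=
  match t with
  | Tgen x => f x
  | Tzero => 0
  | Tadd t1 t2 => eval f t1 + eval f t2
  | Topp t1 => - eval f t1
  | Tscale a t1 => a *: eval f t1
  | Tmul t1 t2 => ca_mu A (eval f t1) (eval f t2)
  | Td t1 => ca_d A (eval f t1)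
  | Tpi n t1 => ca_pi A n (eval f t1)
  | Tth => ca_th A
  end.

Lemma ass_mor_eval (A B : curvedAss K) (h : A -> B) :
  ass_mor h -> forall (f : g -> A) t, h (eval f t) = eval (h \o f) t.
Proof.
case=> h_lin h_pi h_mu h_d h_th f.
elim => //= [|t1 IH1 t2 IH2|t1 IH1|a t1 IH1|t1 IH1 t2 IH2|t1 IH1|n t1 IH1].
- exact: linear_op0.
- by rewrite (linear_opD h_lin) IH1 IH2.
- by rewrite (linear_opN h_lin) IH1.
- by rewrite (linear_opZ h_lin) IH1.
- by rewrite h_mu IH1 IH2.
- by rewrite h_d IH1.
- by rewrite h_pi IH1.
Qed.

HB.instance Definition _ := gen_eqMixin term.
HB.instance Definition _ := gen_choiceMixin term.

(* Comparing terms by their values, instead of taking a product over all pairs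
   (A, f), keeps U in the universe of the algebras A it maps to. *)
Definition sem_eq (t1 t2 : term) : bool :=
  `[< forall (A : curvedAss K) (f : g -> A), lie_mor_to_skew f -> eval f t1 = eval f t2 >].

Lemma sem_eq_is_equiv : equiv_class_of sem_eq.
Proof.
split=> [t|t1 t2|t1 t2 t3]; rewrite /sem_eq.
- by apply/asboolP.
- by apply/asboolP/asboolP => t12 A f f_mor; rewrite t12.
- by move=> /asboolP t12 /asboolP t23; apply/asboolP => A f f_mor; rewrite t12 ?t23.
Qed.

Canonical sem_eq_equiv := EquivRelPack sem_eq_is_equiv.

Definition U := {eq_quot sem_eq}.
HB.instance Definition _ := Choice.on U.


Definition evU (A : curvedAss K) (f : g -> A) (u : U) : A := eval f (repr u).

Lemma eq_evU (u v : U) :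
  (forall (A : curvedAss K) (f : g -> A), lie_mor_to_skew f -> evU f u = evU f v) -> u = v.
Proof. by move=> uv; rewrite -[u]reprK -[v]reprK; apply/eqquotP/asboolP. Qed.

Definition Uadd (u v : U) : U := \pi_U (Tadd (repr u) (repr v)).
Definition Uopp (u : U) : U := \pi_U (Topp (repr u)).
Definition Uscale (a : K) (u : U) : U := \pi_U (Tscale a (repr u)).
Definition Umu (u v : U) : U := \pi_U (Tmul (repr u) (repr v)).
Definition Ud (u : U) : U := \pi_U (Td (repr u)).
Definition Upi (n : int) (u : U) : U := \pi_U (Tpi n (repr u)).
Definition Uth : U := \pi_U Tth.
Definition eta (x : g) : U := \pi_U (Tgen x).

Section Evaluation.
Variables (A : curvedAss K) (f : g -> A).
Hypothesis f_mor : lie_mor_to_skew f.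

Lemma evU_pi t : evU f (\pi_U t) = eval f t.
Proof. by have /eqquotP/asboolP := reprK (\pi_U t); apply. Qed.

Lemma evU_add u v : evU f (Uadd u v) = evU f u + evU f v. Proof. exact: evU_pi. Qed.
Lemma evU_opp u : evU f (Uopp u) = - evU f u. Proof. exact: evU_pi. Qed.
Lemma evU_scale a u : evU f (Uscale a u) = a *: evU f u. Proof. exact: evU_pi. Qed.
Lemma evU_mu u v : evU f (Umu u v) = ca_mu A (evU f u) (evU f v). Proof. exact: evU_pi. Qed.
Lemma evU_d u : evU f (Ud u) = ca_d A (evU f u). Proof. exact: evU_pi. Qed.
Lemma evU_proj n u : evU f (Upi n u) = ca_pi A n (evU f u). Proof. exact: evU_pi. Qed.
Lemma evU_th : evU f Uth = ca_th A. Proof. exact: evU_pi. Qed.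
Lemma evU_eta x : evU f (eta x) = f x. Proof. exact: evU_pi. Qed.

Definition evUE :=
  (evU_add, evU_opp, evU_scale, evU_mu, evU_d, evU_proj, evU_th, evU_eta, evU_pi).

End Evaluation.

Local Ltac evU_ext := apply: eq_evU => A f f_mor;
  match goal with f_mor : lie_mor_to_skew _ |- _ => rewrite ?(evUE f_mor) end.

Lemma UaddA : associative Uadd. Proof. by move=> x y z; evU_ext; rewrite addrA. Qed.
Lemma UaddC : commutative Uadd. Proof. by move=> x y; evU_ext; rewrite addrC. Qed.
Lemma Uadd0 : left_id (\pi_U Tzero) Uadd. Proof. by move=> x; evU_ext; rewrite add0r. Qed.
Lemma UaddN : left_inverse (\pi_U Tzero) Uopp Uadd.
Proof. by move=> x; evU_ext; rewrite addNr. Qed.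

HB.instance Definition _ := GRing.isZmodule.Build U UaddA UaddC Uadd0 UaddN.

Lemma UscaleA a b u : Uscale a (Uscale b u) = Uscale (a * b) u.
Proof. by evU_ext; rewrite scalerA. Qed.
Lemma Uscale1 : left_id 1 Uscale. Proof. by move=> u; evU_ext; rewrite scale1r. Qed.
Lemma UscaleDr : right_distributive Uscale +%R.
Proof. by move=> a u v; evU_ext; rewrite scalerDr. Qed.
Lemma UscaleDl u : {morph Uscale^~ u : a b / a + b}.
Proof. by move=> a b; evU_ext; rewrite scalerDl. Qed.

HB.instance Definition _ :=
  GRing.Zmodule_isLmodule.Build K U UscaleA Uscale1 UscaleDr UscaleDl.

Lemma evU_homog (A : curvedAss K) (f : g -> A) n u : lie_mor_to_skew f ->
  homog Upi n u -> homog (ca_pi A) n (evU f u).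
Proof. by move=> f_mor; rewrite /homog -(evU_proj f_mor) => ->. Qed.

Lemma Upi_lin n : linear_op (Upi n).
Proof. by move=> a x y; evU_ext; apply: (gr_lin (ca_grading A)). Qed.

Lemma Upi_orth n m x : Upi n (Upi m x) = if n == m then Upi m x else 0.
Proof.
by case: eqP => [->|/eqP nm]; evU_ext; rewrite (gr_orth (ca_grading A)) ?eqxx ?(negbTE nm).
Qed.

Lemma Umu_bil : bilinear_op Umu.
Proof.
by split=> a x y z; evU_ext; [apply: (caa_bil (ca_ax A)).1 | apply: (caa_bil (ca_ax A)).2].
Qed.

Lemma Umu_homog p q x y : homog Upi p x -> homog Upi q y -> homog Upi (p + q) (Umu x y).
Proof.
move=> xp yq; evU_ext.
exact: caa_deg (ca_ax A) _ _ _ _ (evU_homog f_mor xp) (evU_homog f_mor yq).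
Qed.

Lemma UmuA x y z : Umu (Umu x y) z = Umu x (Umu y z).
Proof. by evU_ext; apply: (caa_assoc (ca_ax A)). Qed.

Lemma Ud_lin : linear_op Ud.
Proof. by move=> a x y; evU_ext; apply: (caa_dlin (ca_ax A)). Qed.

Lemma Ud_homog p x : homog Upi p x -> homog Upi (p - 1) (Ud x).
Proof. by move=> xp; evU_ext; apply: (caa_ddeg (ca_ax A)) (evU_homog f_mor xp). Qed.

Lemma Ud_der p x y :
  homog Upi p x -> Ud (Umu x y) = Umu (Ud x) y + ksgn1 K p *: Umu x (Ud y).
Proof. by move=> xp; evU_ext; apply: (caa_dder (ca_ax A)) (evU_homog f_mor xp). Qed.

Lemma Uth_homog : homog Upi (-2) Uth.
Proof. by evU_ext; apply: (caa_thdeg (ca_ax A)). Qed.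

Lemma Udd x : Ud (Ud x) = Umu Uth x - Umu x Uth.
Proof. by evU_ext; apply: (caa_dd (ca_ax A)). Qed.

Lemma Ud_th : Ud Uth = 0.
Proof. by evU_ext; apply: (caa_dth (ca_ax A)). Qed.

Lemma pi_add t1 t2 : \pi_U (Tadd t1 t2) = (\pi_U t1 : U) + (\pi_U t2 : U).
Proof. by evU_ext. Qed.
Lemma pi_opp t : \pi_U (Topp t) = - (\pi_U t : U). Proof. by evU_ext. Qed.
Lemma pi_scale a t : \pi_U (Tscale a t) = a *: (\pi_U t : U). Proof. by evU_ext. Qed.
Lemma pi_mul t1 t2 : \pi_U (Tmul t1 t2) = Umu (\pi_U t1) (\pi_U t2). Proof. by evU_ext. Qed.
Lemma pi_d t : \pi_U (Td t) = Ud (\pi_U t). Proof. by evU_ext. Qed.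
Lemma pi_proj n t : \pi_U (Tpi n t) = Upi n (\pi_U t). Proof. by evU_ext. Qed.

Lemma eta_lin : linear_op eta.
Proof. by move=> a x y; evU_ext; case: f_mor => f_lin _ _ _ _; apply: f_lin. Qed.

Lemma eta_proj n x : eta (cl_pi g n x) = Upi n (eta x).
Proof. by evU_ext; case: f_mor => _ f_pi _ _ _; apply: f_pi. Qed.

Lemma homog_sum_eta x : homog_sum Upi (eta x).
Proof.
have [s [_ _ ->]] := gr_dec (cl_grading g) x; rewrite (linear_op_sum eta_lin).
apply: homog_sum_big => n _; apply: (homog_sum_homog (n := n)).
by rewrite /homog eta_proj Upi_orth eqxx.
Qed.

Lemma homog_sum_pi t : homog_sum Upi (\pi_U t).
Proof.
elim: t => [x||t1 IH1 t2 IH2|t IH|a t IH|t1 IH1 t2 IH2|t IH|n t IH|].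
- exact: homog_sum_eta.
- exact: homog_sum0.
- by rewrite pi_add; apply: homog_sumD.
- rewrite pi_opp; apply: (homog_sum_lin (k := id)) IH => [b x y|p x xp].
    by rewrite opprD scalerN.
  by rewrite /homog (linear_opN (Upi_lin p)) xp.
- rewrite pi_scale; apply: (homog_sum_lin (k := id)) IH => [b x y|p x xp].
    by rewrite scalerDr !scalerA mulrC.
  by rewrite /homog (linear_opZ (Upi_lin p)) xp.
- by rewrite pi_mul; apply: homog_sum_bil Umu_bil Umu_homog IH1 IH2.
- by rewrite pi_d; apply: homog_sum_lin Ud_lin Ud_homog IH.
- rewrite pi_proj; apply: (homog_sum_lin (k := fun=> n)) (Upi_lin n) _ IH => p x _.
  by rewrite /homog Upi_orth eqxx.
- exact: homog_sum_homog Uth_homog.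
Qed.

Lemma U_grading : is_grading Upi.
Proof.
split; [exact: Upi_lin | exact: Upi_orth | move=> u].
by have := homog_sum_pi (repr u); rewrite reprK => /(homog_sum_dec Upi_lin Upi_orth).
Qed.

Lemma U_curved_ass : curved_ass_axioms Upi Umu Ud Uth.
Proof.
split; [exact: Umu_bil | exact: Umu_homog | exact: UmuA | exact: Ud_lin | exact: Ud_homog
       | exact: Ud_der | exact: Uth_homog | exact: Udd | exact: Ud_th].
Qed.

Definition UA : curvedAss K := CurvedAss U_grading U_curved_ass.

Lemma evU_ass_mor (A : curvedAss K) (f : g -> A) :
  lie_mor_to_skew f -> ass_mor (A := UA) (evU f).
Proof.
move=> f_mor; rewrite /ass_mor /curved_mor /=.
by split=> [a x y|n x|x y|x|]; rewrite ?(evUE f_mor).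
Qed.

Lemma eta_lie_mor : lie_mor_to_skew (A := UA) eta.
Proof.
split=> [||x y|x|] /=; [exact: eta_lin | by move=> n x; rewrite eta_proj | | |].
- evU_ext; rewrite (ass_mor_skew_br (evU_ass_mor f_mor)) !(evUE f_mor).
  by case: f_mor => _ _ f_br _ _; apply: f_br.
- by evU_ext; case: f_mor => _ _ _ f_d _; apply: f_d.
- by evU_ext; case: f_mor => _ _ _ _ f_th; apply: f_th.
Qed.

Lemma eval_eta t : eval (A := UA) eta t = \pi_U t.
Proof.
elim: t => //= [t1 IH1 t2 IH2|t IH|a t IH|t1 IH1 t2 IH2|t IH|n t IH].
- by rewrite pi_add IH1 IH2.
- by rewrite pi_opp IH.
- by rewrite pi_scale IH.
- by rewrite pi_mul IH1 IH2.
- by rewrite pi_d IH.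
- by rewrite pi_proj IH.
Qed.

Lemma ass_mor_eta_unique (A : curvedAss K) (f : g -> A) (h : UA -> A) :
  lie_mor_to_skew f -> ass_mor h -> (forall x, h (eta x) = f x) -> h =1 evU f.
Proof.
move=> f_mor h_mor h_eta u; rewrite /evU -{1}[u]reprK -eval_eta.
by rewrite (ass_mor_eval h_mor); congr eval; apply: funext.
Qed.

End Enveloping.

Theorem corollary3p12 (K : fieldType) (hK : [pchar K] =i pred0) (g : curvedLie K) :
  exists (U : curvedAss K) (eta : g -> U),
    lie_mor_to_skew eta /\
    forall (A : curvedAss K) (f : g -> A), lie_mor_to_skew f ->
      exists h : U -> A,
        [/\ ass_mor h, (forall x, h (eta x) = f x) &
            forall h' : U -> A, ass_mor h' -> (forall x, h' (eta x) = f x) ->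
              forall u, h' u = h u].
Proof.
exists (UA g), (@eta K g); split; first exact: eta_lie_mor.
move=> A f f_mor; exists (evU f); split; first exact: evU_ass_mor.
  by move=> x; rewrite (evUE f_mor).
by move=> h h_mor h_eta; apply: ass_mor_eta_unique.
Qed.
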